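(* Let $x,p\in\mathbb{R}^d$ with $\lVert x\rVert=1$ and $p\neq 0$, and let $\delta\in\mathbb{R}$ with $\lVert p\rVert\ge\delta$. Put $\hat p=p/\lVert p\rVert$, and assume $p+x\neq 0$ and $\delta^2+2\delta\hat p^Tx+1>0$. Let $y=\frac{p+x}{\lVert p+x\rVert}$. Then $$\lVert\hat p-y\rVert\le\sqrt{2-2\,\frac{\delta+\hat p^Tx}{\sqrt{\delta^2+2\delta\hat p^Tx+1}}}.$$
   Context: $\lVert\cdot\rVert$ denotes the Euclidean norm on $\mathbb{R}^d$. *)

From mathcomp Require Import all_boot all_order all_algebra.
From mathcomp Require Import reals.
Set Implicit Arguments. Unset Strict Implicit. Unset Printing Implicit Defensive.
Import Order.TTheory GRing.Theory Num.Theory.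
Local Open Scope ring_scope.

Definition dotp (R : realType) (d : nat) (u v : 'rV[R]_d) : R :=
  \sum_(i < d) u 0 i * v 0 i.

Definition enorm (R : realType) (d : nat) (u : 'rV[R]_d) : R :=
  Num.sqrt (dotp u u).

(* Write n = |p|, c = p̂·x and k = 1 - c^2, which is nonnegative by Cauchy-Schwarz.
   Since p = n p̂ and |x| = 1, |p + x|^2 = (n + c)^2 + k, so p̂·y = f(n) with
   f(t) = (t + c) / sqrt((t + c)^2 + k), and |p̂ - y|^2 = 2 - 2 f(n) because p̂ and y
   are unit vectors. The bound then says f(delta) <= f(n), which holds because
   t |-> t / sqrt(t^2 + k) is nondecreasing for k >= 0. *)
From mathcomp Require Import all_boot all_order all_algebra.
From mathcomp Require Import reals.
From mathcomp Require Import ring lra.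
Import Order.TTheory GRing.Theory Num.Theory.
Local Open Scope ring_scope.

Section InnerProduct.
Variables (R : realType) (d : nat).
Implicit Types (u v w : 'rV[R]_d) (a : R).

Lemma dotpC u v : dotp u v = dotp v u.
Proof. by apply: eq_bigr => i _; rewrite mulrC. Qed.

Lemma dotpDl u v w : dotp (u + v) w = dotp u w + dotp v w.
Proof. by rewrite /dotp -big_split; apply: eq_bigr => i _; rewrite mxE mulrDl. Qed.

Lemma dotpZl a u v : dotp (a *: u) v = a * dotp u v.
Proof. by rewrite /dotp mulr_sumr; apply: eq_bigr => i _; rewrite mxE mulrA. Qed.

Lemma dotpNl u v : dotp (- u) v = - dotp u v.
Proof. by rewrite -scaleN1r dotpZl mulN1r. Qed.

Lemma dotpDr u v w : dotp u (v + w) = dotp u v + dotp u w.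
Proof. by rewrite dotpC dotpDl !(dotpC u). Qed.

Lemma dotpZr a u v : dotp u (a *: v) = a * dotp u v.
Proof. by rewrite dotpC dotpZl dotpC. Qed.

Lemma dotpNr u v : dotp u (- v) = - dotp u v.
Proof. by rewrite dotpC dotpNl dotpC. Qed.

Lemma dotp_ge0 u : 0 <= dotp u u.
Proof. by apply: sumr_ge0 => i _; rewrite -expr2 sqr_ge0. Qed.

Lemma dotp_eq0 u : (dotp u u == 0) = (u == 0).
Proof.
apply/eqP/eqP => [u0|->]; last by apply: big1 => i _; rewrite mxE mul0r.
apply/rowP => i; have /eqP := psumr_eq0P (fun j _ => sqr_ge0 (u 0 j)) u0 (i := i) isT.
by rewrite mxE mulf_eq0 orbb => /eqP.
Qed.

Lemma enorm_sqr u : enorm u ^+ 2 = dotp u u.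
Proof. by rewrite sqr_sqrtr // dotp_ge0. Qed.

Lemma enorm_gt0 u : (0 < enorm u) = (u != 0).
Proof. by rewrite sqrtr_gt0 lt_def dotp_eq0 dotp_ge0 andbT. Qed.

Lemma dotp_normalize u : u != 0 -> dotp ((enorm u)^-1 *: u) ((enorm u)^-1 *: u) = 1.
Proof.
rewrite -enorm_gt0 => u_gt0.
by rewrite dotpZl dotpZr -enorm_sqr mulrA -expr2 -exprMn mulVf ?gt_eqF ?expr1n.
Qed.

Lemma dotp_unit_sqr_le1 u v : dotp u u = 1 -> dotp v v = 1 -> dotp u v ^+ 2 <= 1.
Proof.
move=> u1 v1; have := dotp_ge0 (v - dotp u v *: u).
rewrite dotpDl !dotpDr !dotpNl !dotpNr !dotpZl !dotpZr u1 v1 (dotpC v u).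
lra.
Qed.

Lemma enorm_sub_unit u v : dotp u u = 1 -> dotp v v = 1 ->
  enorm (u - v) = Num.sqrt (2 - 2 * dotp u v).
Proof.
move=> u1 v1; congr Num.sqrt.
by rewrite dotpDl !dotpDr !dotpNl !dotpNr u1 v1 (dotpC v u); ring.
Qed.

Lemma enorm_scale_unitD a u v : dotp u u = 1 -> dotp v v = 1 ->
  enorm (a *: u + v) ^+ 2 = (a + dotp u v) ^+ 2 + (1 - dotp u v ^+ 2).
Proof.
move=> u1 v1; rewrite enorm_sqr dotpDl !dotpDr !dotpZl !dotpZr u1 v1 (dotpC v u).
ring.
Qed.

End InnerProduct.

Section SqrtRatio.
Variable R : realType.
Implicit Types a b k : R.

Lemma mul_sqrt_sqrD_le_nneg k a b : 0 <= k -> 0 <= b <= a ->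
  b * Num.sqrt (a ^+ 2 + k) <= a * Num.sqrt (b ^+ 2 + k).
Proof.
move=> k0 /andP[b0 ba]; have a0 : 0 <= a by apply: le_trans ba.
rewrite -ler_sqr ?nnegrE ?mulr_ge0 ?sqrtr_ge0 //.
rewrite !exprMn !sqr_sqrtr ?addr_ge0 ?sqr_ge0 //.
have : b ^+ 2 * k <= a ^+ 2 * k by rewrite ler_wpM2r // ler_sqr ?nnegrE.
lra.
Qed.

Lemma mul_sqrt_sqrD_le k a b : 0 <= k -> b <= a ->
  b * Num.sqrt (a ^+ 2 + k) <= a * Num.sqrt (b ^+ 2 + k).
Proof.
move=> k0 ba; have [b0|b_lt0] := lerP 0 b.
  by apply: mul_sqrt_sqrD_le_nneg; rewrite ?b0.
have [a0|a_lt0] := lerP 0 a.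
  apply: (@le_trans _ _ 0); first by rewrite nmulr_rle0 ?sqrtr_ge0.
  by rewrite mulr_ge0 ?sqrtr_ge0.
have := @mul_sqrt_sqrD_le_nneg k (- b) (- a) k0.
by rewrite !sqrrN !mulNr lerN2 oppr_ge0 lerN2 ba ltW //; apply.
Qed.

Lemma div_sqrt_sqrD_le k a b : 0 <= k -> 0 < b ^+ 2 + k -> 0 < a ^+ 2 + k -> b <= a ->
  b / Num.sqrt (b ^+ 2 + k) <= a / Num.sqrt (a ^+ 2 + k).
Proof.
move=> k0 bk ak ba; rewrite ler_pdivrMr ?sqrtr_gt0 // mulrAC ler_pdivlMr ?sqrtr_gt0 //.
exact: mul_sqrt_sqrD_le.
Qed.

End SqrtRatio.

Theorem lemma4 (R : realType) (d : nat) (x p : 'rV[R]_d) (delta : R) :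
  enorm x = 1 -> p != 0 -> delta <= enorm p ->
  let phat := (enorm p)^-1 *: p in
  p + x != 0 ->
  0 < delta ^+ 2 + 2 * delta * dotp phat x + 1 ->
  let y := (enorm (p + x))^-1 *: (p + x) in
  enorm (phat - y) <=
    Num.sqrt (2 - 2 * ((delta + dotp phat x) /
                       Num.sqrt (delta ^+ 2 + 2 * delta * dotp phat x + 1))).
Proof.
move=> x1 p0 delta_le phat px0 delta_pos; cbv zeta.
set y := (enorm (p + x))^-1 *: (p + x).
have phat1 : dotp phat phat = 1 by exact: dotp_normalize.
have y1 : dotp y y = 1 by exact: dotp_normalize.
have xx1 : dotp x x = 1 by rewrite -enorm_sqr x1 expr1n.
have p_eq : p = enorm p *: phat by rewrite scalerA mulfV ?scale1r // gt_eqF ?enorm_gt0.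
set n := enorm p in delta_le p_eq; set c := dotp phat x in delta_pos *.
set m := enorm (p + x); have m_gt0 : 0 < m by rewrite enorm_gt0.
have m_sqr : m ^+ 2 = (n + c) ^+ 2 + (1 - c ^+ 2) by rewrite /m p_eq enorm_scale_unitD.
have m_eq : m = Num.sqrt ((n + c) ^+ 2 + (1 - c ^+ 2)).
  by rewrite -m_sqr sqrtr_sqr gtr0_norm.
have phat_y : dotp phat y = (n + c) / m.
  by rewrite dotpZr {2}p_eq dotpDr dotpZr phat1 mulr1 mulrC.
have c_sqr : c ^+ 2 <= 1 by exact: dotp_unit_sqr_le1.
have delta_sqr : delta ^+ 2 + 2 * delta * c + 1 = (delta + c) ^+ 2 + (1 - c ^+ 2).
  by ring.
have ratio_le : (delta + c) / Num.sqrt ((delta + c) ^+ 2 + (1 - c ^+ 2)) <= (n + c) / m.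
  rewrite m_eq; apply: div_sqrt_sqrD_le; rewrite ?subr_ge0 ?lerD2r //.
  - by rewrite -delta_sqr.
  - by rewrite -m_sqr exprn_gt0.
rewrite enorm_sub_unit // phat_y delta_sqr; apply: ler_wsqrtr; lra.
Qed.
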